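(* Every finite nonempty set of negative integers is the signed degree set of some connected signed bipartite graph.
   Context: A signed bipartite graph $G(U,V)$ is a finite simple bipartite graph with bipartition $U, V$ (both nonempty, every edge joining a vertex of $U$ to a vertex of $V$) in which each edge is assigned a sign, positive or negative. The signed degree of a vertex $x$ is $\mathrm{sdeg}(x) = d^+(x) - d^-(x)$, where $d^+(x)$ (resp. $d^-(x)$) is the number of positive (resp. negative) edges incident with $x$. The signed degree set of $G(U,V)$ is the set of distinct signed degrees of its vertices. $G(U,V)$ is called connected if each vertex of $U$ is connected (by a path) to every vertex of $V$. *)

From mathcomp Require Import all_boot all_order all_algebra.
Set Implicit Arguments. Unset Strict Implicit. Unset Printing Implicit Defensive.
Import GRing.Theory Num.Theory.

(* A signed bipartite graph with parts U and V: for each pair (u, v),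
   [g u v] is [None] (no edge), [Some true] (a positive edge) or
   [Some false] (a negative edge).  Simplicity (at most one edge between
   u and v) is built in. *)
Definition sbigraph (U V : finType) := U -> V -> option bool.

Section SignedBipartite.
Variables (U V : finType) (g : sbigraph U V).

Definition vertex := (U + V)%type.

Definition sadj : rel vertex := fun x y =>
  match x, y with
  | inl u, inr v => g u v != None
  | inr v, inl u => g u v != None
  | _, _ => false
  end.

Definition dplus (x : vertex) : nat :=
  match x with
  | inl u => #|[set v | g u v == Some true]|
  | inr v => #|[set u | g u v == Some true]|
  end.
Definition dminus (x : vertex) : nat :=
  match x with
  | inl u => #|[set v | g u v == Some false]|
  | inr v => #|[set u | g u v == Some false]|
  end.

Definition sdeg (x : vertex) : int := (dplus x)%:Z - (dminus x)%:Z.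

Definition sb_connected : Prop :=
  forall (u : U) (v : V), connect sadj (inl u) (inr v).

Definition in_sdeg_set (z : int) : Prop := exists x : vertex, sdeg x = z.

End SignedBipartite.

From mathcomp Require Import all_boot all_order all_algebra.
Import GRing.Theory Num.Theory.
Set Implicit Arguments. Unset Strict Implicit. Unset Printing Implicit Defensive.

(* Let h bound the absolute values |a_i| of the prescribed degrees, and give each
   a_i three blocks of 2h vertices on either side.  Two vertices in different
   blocks are always joined, positively when they lie in the same half of their
   blocks and negatively otherwise, so these edges contribute h - h = 0 to every
   signed degree.  Inside a block of value a_i an |a_i|-regular circulant of
   negative edges then makes the signed degree of each of its vertices a_i.
   With at least three blocks, any two vertices are joined by a path of length
   at most 3 through other blocks. *)

Lemma card_ord_ltn (K a : nat) : a <= K -> #|[set l : 'I_K | l < a]| = a.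
Proof.
move=> le_aK.
have -> : [set l : 'I_K | l < a] = [set widen_ord le_aK m | m : 'I_a].
  apply/setP => l; rewrite inE; apply/idP/imsetP => [lt_la | [m _ ->]].
    by exists (Ordinal lt_la) => //; apply/val_inj.
  exact: (ltn_ord m).
rewrite card_imset ?card_ord //.
by move=> m m' /(congr1 val) /= /ord_inj.
Qed.

Lemma card_ord_addn_modn_ltn (K a k : nat) :
  0 < K -> a <= K -> #|[set l : 'I_K | (k + l) %% K < a]| = a.
Proof.
move=> K_gt0 le_aK.
pose rot (l : 'I_K) : 'I_K := Ordinal (ltn_pmod (k + l) K_gt0).
have rot_inj : injective rot.
  move=> l l' /(congr1 val)/eqP /=.
  by rewrite eqn_modDl !modn_small // => /eqP/val_inj.
have -> : [set l : 'I_K | (k + l) %% K < a] = rot @^-1: [set l : 'I_K | l < a].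
  by apply/setP => l; rewrite !inE.
by rewrite card_preimset // card_ord_ltn.
Qed.

Lemma card_ord_half (h : nat) (s : bool) :
  #|[set l : 'I_(h + h) | (l < h) == s]| = h.
Proof.
have card_low := @card_ord_ltn (h + h) h (leq_addr h h).
case: s.
  by rewrite -[RHS]card_low; apply: eq_card => l; rewrite !inE eqb_id.
have -> : [set l : 'I_(h + h) | (l < h) == false] = ~: [set l : 'I_(h + h) | l < h].
  by apply/setP => l; rewrite !inE eqbF_neg.
by apply/eqP; rewrite -(eqn_add2l h) -{1}card_low cardsC card_ord.
Qed.

Lemma sdeg_inr_sym (T : finType) (g : sbigraph T T) :
  (forall u v, g u v = g v u) -> forall v, sdeg g (inr v) = sdeg g (inl v).
Proof.
move=> gC v; have col_row s : [set u | g u v == s] = [set u | g v u == s].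
  by apply/setP => u; rewrite !inE gC.
by rewrite /sdeg /= !col_row.
Qed.

Section BlockGraph.

Variables (B : finType) (a : B -> nat) (h : nat).
Hypothesis a_le : forall b, a b <= h.

Local Notation vtx := (B * 'I_(h + h))%type.

Definition block_graph : sbigraph vtx vtx := fun u v =>
  if u.1 == v.1 then (if (u.2 + v.2) %% (h + h) < a u.1 then Some false else None)
  else Some ((u.2 < h) == (v.2 < h)).

Definition block (x : (vtx + vtx)%type) : B :=
  match x with inl u => u.1 | inr v => v.1 end.

Lemma block_graphC u v : block_graph u v = block_graph v u.
Proof.
rewrite /block_graph eq_sym addnC.
by case: eqP => [-> // | _]; rewrite eq_sym.
Qed.

Lemma block_graph_cross u v :
  u.1 != v.1 -> block_graph u v = Some ((u.2 < h) == (v.2 < h)).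
Proof. by rewrite /block_graph => /negbTE->. Qed.

Lemma dplus_block_graph u : dplus block_graph (inl u) = (#|B|.-1 * h)%N.
Proof.
rewrite /=.
have -> : [set v | block_graph u v == Some true] =
          setX [set~ u.1] [set l : 'I_(h + h) | (l < h) == (u.2 < h)].
  apply/setP => -[b l]; rewrite !inE /block_graph /=.
  by case: (eqVneq u.1 b) => _ /=; [case: ifP | case: (l < h); case: (u.2 < h)].
by rewrite cardsX cardsC1 card_ord_half.
Qed.

Lemma dminus_block_graph u : dminus block_graph (inl u) = (a u.1 + #|B|.-1 * h)%N.
Proof.
have le_aK : a u.1 <= h + h by rewrite (leq_trans (a_le _)) ?leq_addr.
have K_gt0 : 0 < h + h by apply: leq_ltn_trans (ltn_ord u.2).
rewrite /= -(cardsID [set v | v.1 == u.1]); congr (_ + _).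
  have -> : [set v | block_graph u v == Some false] :&: [set v | v.1 == u.1] =
            setX [set u.1] [set l : 'I_(h + h) | (u.2 + l) %% (h + h) < a u.1].
    apply/setP => -[b l]; rewrite !inE /block_graph /=.
    by case: (eqVneq u.1 b) => _; rewrite /= ?andbT ?andbF //; case: ifP.
  by rewrite cardsX cards1 mul1n card_ord_addn_modn_ltn.
have -> : [set v | block_graph u v == Some false] :\: [set v | v.1 == u.1] =
          setX [set~ u.1] [set l : 'I_(h + h) | (l < h) == ~~ (u.2 < h)].
  apply/setP => -[b l]; rewrite !inE /block_graph /=.
  by case: (eqVneq u.1 b) => _ //=; case: (l < h); case: (u.2 < h).
by rewrite cardsX cardsC1 card_ord_half.
Qed.

Lemma sdeg_block_graph x : sdeg block_graph x = (- (a (block x))%:Z)%R.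
Proof.
have sdeg_inl u : sdeg block_graph (inl u) = (- (a u.1)%:Z)%R.
  by rewrite /sdeg dplus_block_graph dminus_block_graph PoszD opprD addrCA subrr addr0.
by case: x => u; rewrite ?sdeg_inr_sym ?sdeg_inl //; apply: block_graphC.
Qed.

Lemma block_graph_connected : 2 < #|B| -> sb_connected block_graph.
Proof.
move=> B_gt2 u v.
have [same | ne] := eqVneq u.1 v.1; last first.
  by apply: connect1; rewrite /= block_graph_cross.
have : 1 < #|[set~ u.1]| by rewrite cardsC1 -ltnS (ltn_predK B_gt2).
case/card_gt1P => b1 [b2 []]; rewrite !in_setC1 => b1_u b2_u b12.
apply/connectP; exists [:: inr (b1, u.2); inl (b2, u.2); inr v] => //=.
by rewrite !block_graph_cross // -?same // eq_sym.
Qed.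

End BlockGraph.

Arguments block_graph {B} a h.

Local Open Scope ring_scope.

Theorem corollary2p1 (S : seq int) :
  S != [::] -> all (fun z => z < 0) S ->
  exists (U V : finType) (g : sbigraph U V),
    [/\ (0 < #|U|)%N, (0 < #|V|)%N, sb_connected g &
        forall z : int, z \in S <-> in_sdeg_set g z].
Proof.
move=> S_neq0 S_neg.
have S_gt0 : (0 < size S)%N by case: S S_neq0 {S_neg}.
pose a (b : 'I_3 * 'I_(size S)) := absz S`_b.2.
pose h := \max_b a b.
have a_le b : (a b <= h)%N by apply: leq_bigmax.
have S_ltr0 i : (i < size S)%N -> S`_i < 0 by move=> lt_iS; apply/(allP S_neg)/mem_nth.
have h_gt0 : (0 < h + h)%N.
  rewrite addn_gt0 orbb (leq_trans _ (a_le (ord0, Ordinal S_gt0))) // absz_gt0.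
  by rewrite ltr0_neq0 ?S_ltr0.
have sdeg_nth x : sdeg (block_graph a h) x = S`_(block x).2.
  by rewrite (sdeg_block_graph a_le) /a abszE ltr0_norm ?opprK ?S_ltr0.
have card_vtx : (0 < #|{: ('I_3 * 'I_(size S)) * 'I_(h + h)}|)%N.
  by rewrite !card_prod !card_ord !muln_gt0 S_gt0 h_gt0.
exists _, _, (block_graph a h); split => //.
  by apply: block_graph_connected; rewrite card_prod !card_ord (leq_pmulr 3 S_gt0).
move=> z; split => [z_in | [x <-]]; last by rewrite sdeg_nth mem_nth.
have lt_zS : (index z S < size S)%N by rewrite index_mem.
by exists (inl ((ord0, Ordinal lt_zS), Ordinal h_gt0)); rewrite sdeg_nth nth_index.
Qed.
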